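(* Let $K$ be an algebraically closed field of characteristic three, and let $C_3^2 = C_3\times C_3$. For any injective group homomorphism $\iota\colon C_3^2\to \mathrm{SL}(3,K)$ whose image is small, there exist $a\in K\setminus\mathbb F_3$ and $b\in K$ such that $\sigma(U(a,b))$ is conjugate in $\mathrm{GL}(3,K)$ to $\iota(C_3^2)$. Here $U(a,b)$ is the subgroup of the additive group $(K^2,+)$ generated by $(1,0)$ and $(a,b)$, and $\sigma\colon (K^2,+)\to \mathrm{SL}(3,K)$ is the group homomorphism $$\sigma(c_1,c_2)=\begin{pmatrix}1&-c_1&c_1^2+c_2\\0&1&c_1\\0&0&1\end{pmatrix}.$$
   Context: A subgroup $G\subset\mathrm{GL}(n,K)$ acts on $K^n$; an element $g\in G$ is a pseudo-reflection if its fixed subspace $(K^n)^g$ has dimension $n-1$. The group $G$ is called small if it contains no pseudo-reflection. $\mathbb F_3\subset K$ denotes the prime field. *)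

From HB Require Import structures.
From mathcomp Require Import all_boot all_order all_algebra.
Set Implicit Arguments. Unset Strict Implicit. Unset Printing Implicit Defensive.
Import GRing.Theory.
Local Open Scope ring_scope.

Definition fixdim (K : fieldType) (n : nat) (g : 'M[K]_n) : nat :=
  \rank (kermx (g - 1%:M)).

Definition pseudo_reflection (K : fieldType) (n : nat) (g : 'M[K]_n) : bool :=
  fixdim g == n.-1.

Definition small (K : fieldType) (n : nat) (G : 'M[K]_n -> Prop) : Prop :=
  forall g, G g -> ~~ pseudo_reflection g.

Definition in_prime_field (K : fieldType) (a : K) : Prop :=
  exists z : int, a = z%:~R.

Definition U_ab (K : fieldType) (a b : K) (c : K * K) : Prop :=
  exists i j : int, c = (((1 : K), (0 : K)) *~ i + (a, b) *~ j)%R.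

Definition sigma (K : fieldType) (c : K * K) : 'M[K]_3 :=
  \matrix_(i < 3, j < 3)
    nth 0 (nth [::] [:: [:: 1; - c.1; c.1 ^+ 2 + c.2];
                        [:: 0; 1; c.1];
                        [:: 0; 0; 1]] i) j.

From HB Require Import structures.
From mathcomp Require Import all_boot all_order all_algebra ring zify.
Set Implicit Arguments. Unset Strict Implicit. Unset Printing Implicit Defensive.
Import GRing.Theory.
Local Open Scope ring_scope.

(* Write g = iota (1, 0) and h = iota (0, 1).  In characteristic 3, g ^+ 3 = 1 gives
   (g - 1) ^+ 3 = 0; as g is neither 1 nor a pseudo-reflection, g - 1 has rank 2, so
   (g - 1) ^+ 2 != 0.  Thus g - 1 and sigma (1, 0) - 1 are both regular nilpotent, hence
   similar (both are similar to the shift matrix through a Krylov basis).  After this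
   change of basis, h commutes with sigma (1, 0) and has determinant 1, which forces
   h = sigma (a, b); then iota (i, j) becomes sigma (i (1, 0) + j (a, b)), whose range is
   sigma (U (a, b)).  Finally, if a were in F_3, some element would be sent to
   sigma (0, b) with b != 0 by injectivity, a pseudo-reflection. *)

Lemma subr1_expr3 (R : nzRingType) (x : R) :
  (3 \in [pchar R])%N -> (x - 1) ^+ 3 = x ^+ 3 - 1.
Proof.
move=> pchar3; have := pFrobenius_autB_comm pchar3 (commr1 x).
by rewrite !pFrobenius_autE expr1n.
Qed.

Lemma expf3_eq1 (R : idomainType) (x : R) :
  (3 \in [pchar R])%N -> x ^+ 3 = 1 -> x = 1.
Proof.
move=> pchar3 x3; have : (x - 1) ^+ 3 == 0 by rewrite subr1_expr3 // x3 subrr.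
by rewrite expf_eq0 subr_eq0 => /eqP.
Qed.

Lemma expr_eq0_leq (R : pzSemiRingType) (x : R) n m :
  x ^+ n = 0 -> (n <= m)%N -> x ^+ m = 0.
Proof. by move=> xn le_nm; rewrite -(subnK le_nm) exprD xn mulr0. Qed.

Lemma pair_mulrn (U V : nmodType) (u : U) (v : V) n :
  (u, v) *+ n = (u *+ n, v *+ n).
Proof. by elim: n => // n IHn; rewrite !mulrS IHn. Qed.

Lemma pair_mulrn_pchar (R : nzSemiRingType) p (c : R * R) :
  p \in [pchar R] -> c *+ p = 0.
Proof. by case: c => c1 c2 pcharp; rewrite pair_mulrn !(mulrn_pchar pcharp). Qed.

Lemma mulrz_modz (V : zmodType) (v : V) p :
  (0 < p)%N -> v *+ p = 0 -> forall z, v *~ z = v *+ `|(z %% p)%Z|%N.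
Proof.
move=> p_gt0 vp0 z; rewrite {1}(divz_eq z p) mulrzDr mulrC mulrzA -pmulrn vp0 mul0rz add0r.
by rewrite -{1}(gez0_abs (modz_ge0 _ _)) ?pmulrn // -lt0n.
Qed.

Section Morphism.
Variables (V : zmodType) (R : unitRingType) (f : V -> R).
Hypothesis fD : {morph f : x y / x + y >-> x * y}.

Lemma morph0_unit : f 0 \is a GRing.unit -> f 0 = 1.
Proof. by move=> f0_unit; apply: (mulrI f0_unit); rewrite -fD addr0 mulr1. Qed.

Lemma morphMn x n : f 0 = 1 -> f (x *+ n) = f x ^+ n.
Proof. by move=> f0; elim: n => [|n IHn]; rewrite ?mulr0n ?f0 // mulrS fD IHn exprS. Qed.

End Morphism.

Lemma Zp_pairE p q (x : 'Z_p * 'Z_q) : x = (1, 0) *+ x.1 + (0, 1) *+ x.2.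
Proof.
case: x => x1 x2; rewrite !pair_mulrn !mul0rn /= !natr_Zp.
by congr pair; rewrite /= ?addr0 ?add0r.
Qed.

Section Nilpotent.
Variables (F : fieldType) (n : nat).
Implicit Types (N M : 'M[F]_n) (v : 'rV[F]_n).

Lemma mxrank_sqr0 N : N *m N = 0 -> ((\rank N).*2 <= n)%N.
Proof.
move=> NN0; have : (N <= kermx N)%MS by apply/sub_kermxP.
by move/mxrankS; rewrite mxrank_ker; lia.
Qed.

Definition shift_mx : 'M[F]_n := \matrix_(i, j) (j == i.+1 :> nat)%:R.

Definition krylov_mx v N : 'M[F]_n := \matrix_(i < n) (v *m N ^+ i).

Lemma krylov_mx_mul v N : N ^+ n = 0 ->
  krylov_mx v N *m N = shift_mx *m krylov_mx v N.
Proof.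
move=> Nn; apply/row_matrixP => i; rewrite /shift_mx.
rewrite row_mul rowK -mulmxA mulmxE -exprSr [RHS]row_mul [RHS]mulmx_sum_row.
case: (ltnP i.+1 n) => [lt_in | le_ni].
  rewrite (bigD1 (Ordinal lt_in)) //= big1 => [|j ne_j]; last first.
    by rewrite !mxE (negPf (ne_j : j != i.+1 :> nat)) scale0r.
  by rewrite !mxE eqxx scale1r rowK addr0.
rewrite (expr_eq0_leq Nn) // mulmx0 big1 // => j _.
by rewrite !mxE ltn_eqF ?scale0r // (leq_trans (ltn_ord j)).
Qed.

Lemma krylov_mx_unit v N : N ^+ n = 0 -> v *m N ^+ n.-1 != 0 ->
  krylov_mx v N \in unitmx.
Proof.
(* Multiplying a relation between the rows by N ^+ (n.-1 - i) isolates its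
   coefficient at the first index i where it might be nonzero. *)
move=> Nn vN; rewrite -row_free_unit; apply/inj_row_free => u uK0.
have u_eq0 (i : 'I_n) : (forall j : 'I_n, (j < i)%N -> u 0 j = 0) -> u 0 i = 0.
  move=> u_lt_i; have := congr1 (mulmx^~ (N ^+ (n.-1 - i))) uK0.
  rewrite mul0mx (mulmx_sum_row u) mulmx_suml (bigD1 i) //= big1 => [|j ne_ji].
    rewrite addr0 rowK -scalemxAl -mulmxA mulmxE -exprD subnKC; last by have := ltn_ord i; lia.
    by move/eqP; rewrite scalemx_eq0 (negPf vN) orbF => /eqP.
  rewrite /krylov_mx rowK -scalemxAl; case: (ltngtP j i) => [/u_lt_i-> | lt_ij | /val_inj eq_ji].
  - by rewrite scale0r.
  - by rewrite -mulmxA mulmxE -exprD (expr_eq0_leq Nn) ?mulmx0 ?scaler0 //; lia.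
  - by rewrite eq_ji eqxx in ne_ji.
apply/rowP => i; rewrite mxE; elim/ltn_ind: {i}(i : nat) {-2}i (erefl (i : nat)).
by move=> m IHm i im; apply: u_eq0 => j lt_ji; apply: (IHm j) => //; rewrite -im.
Qed.

Lemma nilpotent_similar_shift N : N ^+ n = 0 -> N ^+ n.-1 != 0 ->
  exists2 P, P \in unitmx & similar P N shift_mx.
Proof.
move=> Nn Nn1; have [i Ni] : exists i, row i (N ^+ n.-1) != 0.
  case: (pickP (fun i => row i (N ^+ n.-1) != 0)) => [i Ni | rows0]; first by exists i.
  by case/eqP: Nn1; apply/row_matrixP => i; rewrite row0; apply/eqP/negbFE/rows0.
have uK : krylov_mx (delta_mx 0 i) N \in unitmx by rewrite krylov_mx_unit // -rowE.
exists (krylov_mx (delta_mx 0 i) N) => //.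
by apply: similarW; rewrite ?row_free_unit ?krylov_mx_mul.
Qed.

Lemma nilpotent_similar N M : N ^+ n = 0 -> N ^+ n.-1 != 0 ->
  M ^+ n = 0 -> M ^+ n.-1 != 0 -> exists2 P, P \in unitmx & similar P N M.
Proof.
move=> Nn Nn1 Mn Mn1; have [P uP /eqP PN] := nilpotent_similar_shift Nn Nn1.
have [Q uQ /eqP QM] := nilpotent_similar_shift Mn Mn1.
exists (invmx Q *m P); first by rewrite unitmx_mul unitmx_inv uQ.
by apply/eqP; rewrite conjuMumx ?unitmx_inv // PN -QM conjmxK.
Qed.

End Nilpotent.

Section Conjugation.
Variables (F : fieldType) (n : nat) (V : 'M[F]_n).
Hypothesis V_unit : V \in unitmx.

Lemma conjumxM f g : conjmx V (f *m g) = conjmx V f *m conjmx V g.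
Proof. by rewrite conjmxM // inE stablemx_unit. Qed.

Lemma fixdim_conjumx f : fixdim (conjmx V f) = fixdim f.
Proof.
rewrite /fixdim !mxrank_ker; congr (n - _)%N.
have -> : conjmx V f - 1%:M = conjmx V (f - 1%:M).
  have V_free : row_free V by rewrite row_free_unit.
  by rewrite -{1}(conjmx_scalar 1 V_free) /conjmx mulmxBr mulmxBl.
rewrite conjumx // mxrankMfree ?row_free_unit ?unitmx_inv //.
by rewrite eqmxMfull ?row_full_unit.
Qed.

Lemma det_conjumx f : \det (conjmx V f) = \det f.
Proof.
have uV : \det V \is a GRing.unit by rewrite -unitmxE.
by rewrite conjumx // !det_mulmx det_inv mulrAC divrr ?mul1r.
Qed.

Lemma pseudo_reflection_conjumx f :
  pseudo_reflection (conjmx V f) = pseudo_reflection f.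
Proof. by rewrite /pseudo_reflection fixdim_conjumx. Qed.

End Conjugation.

Section Sigma.
Variable K : fieldType.
Hypothesis pchar3 : (3 \in [pchar K])%N.

Lemma sigmaD : {morph @sigma K : c d / c + d >-> c *m d}.
Proof.
case=> [c1 c2] [d1 d2]; apply/matrixP => i j.
rewrite !mxE !big_ord_recr big_ord0 /= !mxE /=.
case: i => [[|[|[|?]]] Hi] //=; case: j => [[|[|[|?]]] Hj] //=; try ring.
(* The corner entries differ by 3 c1 d1. *)
by rewrite -[LHS]subr0 -[X in _ - X](mulrn_pchar pchar3 (c1 * d1)); ring.
Qed.

Lemma sigma0 : sigma 0 = 1 :> 'M[K]_3.
Proof.
apply/matrixP => -[[|[|[|?]]] Hi] // [[|[|[|?]]] Hj] //.
all: by rewrite !mxE /= ?expr0n ?oppr0 ?addr0.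
Qed.

Lemma sigmaMn (c : K * K) m : sigma (c *+ m) = sigma c ^+ m.
Proof. by apply: morphMn sigma0 => x y; rewrite sigmaD mulmxE. Qed.

Lemma pseudo_reflection_sigma (b : K) : b != 0 -> pseudo_reflection (sigma (0, b)).
Proof.
move=> b_neq0; rewrite /pseudo_reflection /fixdim mxrank_ker.
have -> : sigma (0, b) - 1%:M = b *: delta_mx 0 ord_max.
  apply/matrixP => i j; rewrite !mxE /=.
  by case: i => [[|[|[|?]]] ?] //=; case: j => [[|[|[|?]]] ?] //=; ring.
by rewrite mxrank_scale_nz // mxrank_delta.
Qed.

Lemma sigma10_sub1_expr3 : (sigma (1, 0) - 1) ^+ 3 = 0 :> 'M[K]_3.
Proof. by rewrite subr1_expr3 ?pchar_lalg // -sigmaMn pair_mulrn_pchar // sigma0 subrr. Qed.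

Lemma sigma10_sub1_expr2 : (sigma (1, 0) - 1) ^+ 2 != 0 :> 'M[K]_3.
Proof.
apply/eqP => /matrixP/(_ 0 ord_max); rewrite expr2 -mulmxE !mxE.
rewrite !big_ord_recr big_ord0 /= !mxE /= expr1n !(subrr, subr0, addr0, mul0r, mulr0, add0r).
by rewrite mulr1 => /eqP; rewrite oppr_eq0 oner_eq0.
Qed.

Lemma unipotent_similar_sigma10 (g : 'M[K]_3) :
  g ^+ 3 = 1 -> g != 1 -> ~~ pseudo_reflection g ->
  exists2 P, P \in unitmx & similar P g (sigma (1, 0)).
Proof.
move=> g3 g_neq1 g_npr; set N := g - 1.
have N3 : N ^+ 3 = 0 by rewrite subr1_expr3 ?pchar_lalg // g3 subrr.
have N2 : N ^+ 2 != 0.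
  apply: contra g_npr => /eqP N2.
  have := mxrank_sqr0 (N := N); rewrite mulmxE -expr2 N2 => /(_ erefl).
  have : \rank N != 0%N by rewrite mxrank_eq0 subr_eq0.
  by rewrite /pseudo_reflection /fixdim mxrank_ker idmxE -/N; lia.
have [P P_unit /(similarP P_unit) PN] :=
  nilpotent_similar N3 N2 sigma10_sub1_expr3 sigma10_sub1_expr2.
exists P => //; apply/(similarP P_unit).
by move: PN; rewrite !mulmxE mulrBr mulrBl mulr1 mul1r => /subIr.
Qed.

Lemma centralizer_sigma10 (M : 'M[K]_3) :
  sigma (1, 0) *m M = M *m sigma (1, 0) -> \det M = 1 -> exists c, M = sigma c.
Proof.
(* Comparing entries, M is upper triangular with constant diagonal d and
   M 0 1 = - M 1 2; then d ^+ 3 = \det M = 1 forces d = 1. *)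
move=> /matrixP comm detM; pose m (i j : nat) : K := M (inord i) (inord j).
have mE i j (Hi : (i < 3)%N) (Hj : (j < 3)%N) : M (Ordinal Hi) (Ordinal Hj) = m i j.
  by rewrite /m; congr (M _ _); apply: val_inj; rewrite /= inordK.
have E i j (Hi : (i < 3)%N) (Hj : (j < 3)%N) := comm (Ordinal Hi) (Ordinal Hj).
move: (E 2 1 isT isT) (E 2 2 isT isT) (E 1 1 isT isT)
      (E 0 1 isT isT) (E 1 2 isT isT) (E 0 2 isT isT).
rewrite !mxE !big_ord_recr !big_ord0 /= !mxE /= !mE /= expr1n.
rewrite !(mul0r, mulr0, mul1r, mulr1, add0r, addr0, mulN1r, mulrN1).
move=> e21 e22 e11 e01 e12 e02.
have m20 : m 2 0 = 0 by apply/oppr_inj/(addIr (m 2 1)); rewrite -e21 oppr0 add0r.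
have m21 : m 2 1 = 0 by apply: (addIr (m 2 2)); rewrite add0r {2}e22 m20 add0r.
have m10 : m 1 0 = 0 by apply/oppr_inj/(addIr (m 1 1)); rewrite oppr0 add0r -e11 m21 addr0.
have m11 : m 1 1 = m 0 0 by apply/oppr_inj/(addrI (m 0 1)); rewrite [RHS]addrC -e01 m21 addr0.
have m22 : m 2 2 = m 0 0 by apply: (addIr (m 1 2)); rewrite addrC e12 m10 m11 add0r.
have m01 : m 0 1 = - m 1 2.
  by apply/(addrI (m 0 0))/(addIr (m 0 2)); rewrite -e02 m22; ring.
have m00 : m 0 0 = 1.
  apply: expf3_eq1 => //; rewrite -detM -det_tr det_trig; last first.
    by apply/is_trig_mxP => -[[|[|[|?]]] Hi] // [[|[|[|?]]] Hj] //= _; rewrite mxE mE.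
  by rewrite !big_ord_recr big_ord0 !mxE /= !mE /= m11 m22 mul1r -expr2 -exprSr.
exists (m 1 2, m 0 2 - m 1 2 ^+ 2); apply/matrixP => -[[|[|[|?]]] Hi] // [[|[|[|?]]] Hj] //.
all: rewrite !mxE mE /= ?m00 ?m01 ?m10 ?m11 ?m20 ?m21 ?m22 ?m00 //; ring.
Qed.

End Sigma.

Section SmallRepresentation.
Variables (K : fieldType) (iota : 'Z_3 * 'Z_3 -> 'M[K]_3).
Hypotheses (pchar3 : (3 \in [pchar K])%N)
  (iotaM : forall x y, iota (x + y) = iota x *m iota y)
  (iota_det1 : forall x, \det (iota x) = 1) (iota_inj : injective iota)
  (iota_small : small (fun g => exists x, g = iota x)).

Lemma iotaD : {morph iota : x y / x + y >-> x * y}.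
Proof. by move=> x y; rewrite iotaM mulmxE. Qed.

Lemma iota0 : iota 0 = 1.
Proof. by apply: morph0_unit iotaD _; rewrite unitmxE iota_det1 unitr1. Qed.

Definition conjugates_to_sigma P (a b : K) := forall i j,
  conjmx P (iota ((1, 0) *+ i + (0, 1) *+ j)) = sigma ((1, 0) *+ i + (a, b) *+ j).

Lemma exists_conjugates_to_sigma :
  exists P a b, P \in unitmx /\ conjugates_to_sigma P a b.
Proof.
have g3 : iota (1, 0) ^+ 3 = 1.
  by rewrite -(morphMn iotaD) ?iota0 // -iota0; congr (iota _); apply/eqP.
have [P P_unit /eqP P_10] :
    exists2 P, P \in unitmx & similar P (iota (1, 0)) (sigma (1, 0)).
  apply: (unipotent_similar_sigma10 pchar3 g3); first by rewrite -iota0 (inj_eq iota_inj).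
  by apply: iota_small; exists (1, 0).
pose phi x := conjmx P (iota x).
have phiD : {morph phi : x y / x + y >-> x * y}.
  by move=> x y; rewrite /phi iotaD -mulmxE conjumxM.
have phi0 : phi 0 = 1 by rewrite /phi iota0 -idmxE conjmx_scalar ?row_free_unit.
have phi_10 : phi (1, 0) = sigma (1, 0) := P_10.
have [[a b] phi_01] : exists c, phi (0, 1) = sigma c.
  apply: (centralizer_sigma10 pchar3); last by rewrite det_conjumx.
  by rewrite -P_10 -!conjumxM // -!iotaM addrC.
exists P, a, b; split=> // i j.
rewrite -/(phi _) phiD !(morphMn phiD) // phi_10 phi_01.
by rewrite (sigmaD pchar3) !(sigmaMn pchar3) mulmxE.
Qed.

Section ConjugatesToSigma.
Variables (P : 'M[K]_3) (a b : K).
Hypotheses (P_unit : P \in unitmx) (Pab : conjugates_to_sigma P a b).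

(* If a = m in F_3, the element (3 - m, 1) is sent to sigma (0, b), a pseudo-reflection. *)
Lemma conjugates_to_sigma_not_prime_field : ~ in_prime_field a.
Proof.
case=> z az; set m := `|(z %% 3)%Z|%N.
have a_m : a = m%:R by rewrite az (mulrz_modz _ (mulrn_pchar pchar3 1)).
have m_le3 : (m <= 3)%N by have := ltz_pmod z (isT : (0 < 3)%Z); rewrite /m; lia.
pose x : 'Z_3 * 'Z_3 := (1, 0) *+ (3 - m) + (0, 1) *+ 1.
have P_x : conjmx P (iota x) = sigma (0, b).
  rewrite Pab !pair_mulrn mul0rn !mulr1n a_m; congr (sigma (_, _)) => /=; last exact: add0r.
  by rewrite -natrD subnK // (pcharf0 pchar3).
have x_neq0 : x != 0.
  by apply/eqP => /(congr1 snd)/eqP; rewrite /= pair_mulrn /= mul0rn add0r oner_eq0.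
have b_neq0 : b != 0.
  apply: contra x_neq0 => /eqP b0; rewrite -(inj_eq iota_inj) iota0.
  rewrite -(inj_eq (can_inj (fun f => conjmxK f P_unit))) P_x b0 sigma0.
  by rewrite -idmxE conjmx_scalar ?row_free_unit.
have : ~~ pseudo_reflection (conjmx P (iota x)).
  by rewrite pseudo_reflection_conjumx //; apply: iota_small; exists x.
by rewrite P_x pseudo_reflection_sigma.
Qed.

Lemma conjugates_to_sigma_image M :
  (exists2 c, U_ab a b c & M = sigma c) <-> (exists x, M = conjmx P (iota x)).
Proof.
split=> [[_ [i [j ->]] ->] | [x ->]].
  exists ((1, 0) *+ `|(i %% 3)%Z|%N + (0, 1) *+ `|(j %% 3)%Z|%N).
  by rewrite Pab !(mulrz_modz _ (pair_mulrn_pchar _ pchar3)).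
exists ((1, 0) *~ (x.1 : nat) + (a, b) *~ (x.2 : nat)).
  by exists (x.1 : nat)%:Z, (x.2 : nat)%:Z.
by rewrite {1}(Zp_pairE x) Pab -!pmulrn.
Qed.

End ConjugatesToSigma.

End SmallRepresentation.

Theorem proposition3p1 (K : closedFieldType) (hK : (3 \in [pchar K])%N)
  (iota : ('Z_3 * 'Z_3)%type -> 'M[K]_3)
  (hhom : forall x y, iota (x + y) = iota x *m iota y)
  (hSL : forall x, \det (iota x) = 1)
  (hinj : injective iota)
  (hsmall : small (fun g => exists x, g = iota x)) :
  exists (a b : K), ~ in_prime_field a /\
    exists2 P : 'M[K]_3, P \in unitmx &
      forall M : 'M[K]_3,
        (exists2 c, U_ab a b c & M = sigma c) <->
        (exists x, M = invmx P *m iota x *m P).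
Proof.
have [P [a [b [P_unit Pab]]]] := exists_conjugates_to_sigma hK hhom hSL hinj hsmall.
exists a, b; split; first exact: conjugates_to_sigma_not_prime_field Pab.
exists (invmx P); first by rewrite unitmx_inv.
move=> M; rewrite conjugates_to_sigma_image //.
by split=> -[x ->]; exists x; rewrite invmxK conjumx.
Qed.
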